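(* Consider the following setting. Fix a target toxicity probability $\phi\in(0,1)$ and constants $\delta_1,\delta_2>0$. Let the target key be $\mathcal I^*=(\phi-\delta_1,\phi+\delta_2)$, and let $\mathcal I_1,\dots,\mathcal I_K$ be the intervals (''keys'') of common width $\delta_1+\delta_2$ obtained by successively adjoining adjacent intervals of this width to both sides of $\mathcal I^*$ as long as they stay within $[0,1]$, ordered from left to right, with $\mathcal I_{k^*}=\mathcal I^*$. At a given dose level $j$ with toxicity probability $p_j$, $n_j$ patients have been treated. For each patient $i$, $\delta_i\in\{0,1\}$ indicates whether the binary toxicity outcome $x_i$ has been ascertained, and each patient with $\delta_i=0$ (pending) has not experienced toxicity so far and carries a weight $w_i\in[0,1]$. Let $\tilde y_j=\sum_i\delta_ix_i$ (number of observed toxicities), $m_j=\sum_i\delta_i(1-x_i)$, and $\tilde m_j=m_j+\sum_i(1-\delta_i)w_i$. For nonnegative numbers $(y,m)$, define the decision $a(y,m)\in\{-1,0,1\}$ as follows: with $p_j$ having posterior distribution $\mathrm{Beta}(y+1,m+1)$ (i.e. uniform prior and binomial-type likelihood $p_j^{y}(1-p_j)^{m}$), let $k_s=\arg\max_{k=1,\dots,K}\Pr(p_j\in\mathcal I_k)$; set $a=1$ (escalate) if $k_s<k^*$, $a=0$ (stay) if $k_s=k^*$, and $a=-1$ (de-escalate) if $k_s>k^*$. The TITE-keyboard decision based on the observed interim data is $a(D_j^o)=a(\tilde y_j,\tilde m_j)$, and the decision based on the ''cross-sectional'' data $D_j^s=(n_j,\tilde y_j)$, which treats every pending patient as a non-toxicity,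 is $a(D_j^s)=a(\tilde y_j,n_j-\tilde y_j)$. Then the TITE-keyboard design is monotonic: $a(D_j^o)\le a(D_j^s)$ for every dose level $j$.
   Context: The weight $w_i$ represents $\Pr(t_i\le u_i\mid x_i=1)$, where $t_i$ is the time to toxicity and $u_i$ the patient's follow-up time so far, so $w_i\in[0,1]$. A dose-finding design is called monotonic if $a(D_j^o)\le a(D_j^s)$ for all $j$, where $a(\cdot)=-1,0,1$ denote de-escalation, staying at the current dose, and escalation. *)

From HB Require Import structures.
From mathcomp Require Import all_boot all_order all_algebra.
From mathcomp Require Import all_classical all_reals all_analysis.
Set Implicit Arguments. Unset Strict Implicit. Unset Printing Implicit Defensive.
Import Order.TTheory GRing.Theory Num.Theory.
Import numFieldNormedType.Exports.
Local Open Scope classical_set_scope.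
Local Open Scope ring_scope.

Section Keyboard.
Variable R : realType.

Definition beta_kernel (y m : R) (p : R) : R :=
  if (0 <= p) && (p <= 1) then p `^ y * (1 - p) `^ m else 0.

Definition beta_prob (y m a b : R) : R :=
  (\int[lebesgue_measure]_(p in `]a, b[) beta_kernel y m p) /
  (\int[lebesgue_measure]_(p in `[0, 1]) beta_kernel y m p).

(* Keys: common width w = d1 + d2.  Number of keys adjoined to the left of
   I* = ]phi - d1, phi + d2[ (staying inside [0,1]) and to the right. *)
Definition key_width (d1 d2 : R) : R := d1 + d2.
Definition nleft (phi d1 d2 : R) : nat := Num.truncn ((phi - d1) / key_width d1 d2).
Definition nright (phi d1 d2 : R) : nat :=
  Num.truncn ((1 - (phi + d2)) / key_width d1 d2).

(* Keys are indexed 1..K from left to right; the target key has index kstar. *)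
Definition kstar (phi d1 d2 : R) : nat := (nleft phi d1 d2).+1.
Definition nkeys (phi d1 d2 : R) : nat := (nleft phi d1 d2 + 1 + nright phi d1 d2)%N.

Definition key_lo (phi d1 d2 : R) (k : nat) : R :=
  phi - d1 + ((k%:Z - (kstar phi d1 d2)%:Z)%:~R) * key_width d1 d2.
Definition key_hi (phi d1 d2 : R) (k : nat) : R :=
  key_lo phi d1 d2 k + key_width d1 d2.

Definition key_prob (phi d1 d2 y m : R) (k : nat) : R :=
  beta_prob y m (key_lo phi d1 d2 k) (key_hi phi d1 d2 k).

(* k_s = argmax_k Pr(p in I_k); ties broken towards the smallest index. *)
Definition keys_seq (phi d1 d2 : R) : seq nat := iota 1 (nkeys phi d1 d2).
Definition kmax (phi d1 d2 y m : R) : nat :=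
  (find (fun k => all (fun k' => key_prob phi d1 d2 y m k' <= key_prob phi d1 d2 y m k)
                      (keys_seq phi d1 d2))
        (keys_seq phi d1 d2)).+1.

Definition decision (phi d1 d2 y m : R) : int :=
  let ks := kmax phi d1 d2 y m in
  if (ks < kstar phi d1 d2)%N then 1%Z
  else if ks == kstar phi d1 d2 then 0%Z else (-1)%Z.

End Keyboard.

From Pilot Require Import Defs.
From HB Require Import structures.
From mathcomp Require Import all_boot all_order all_algebra.
From mathcomp Require Import all_classical all_reals all_analysis.
From mathcomp Require Import lra zify.
Set Implicit Arguments. Unset Strict Implicit. Unset Printing Implicit Defensive.
Import Order.TTheory GRing.Theory Num.Theory.
Local Open Scope ring_scope.

(** Raising the non-toxicity count from [m] to [m + e] multiplies the posterior
    kernel [p ^ y (1 - p) ^ m] by [(1 - p) ^ e], which is decreasing in [p]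
    (monotone likelihood ratio): it is at most [(1 - c) ^ e] on a key to the
    right of [c] and at least [(1 - c) ^ e] on a key to the left of [c].  So a
    key that has at least the posterior probability of some key to its right
    keeps this property, and the first maximising key [k_s] can only move left,
    i.e. towards escalation.  The cross-sectional data are the observed data
    with [e = n - y - mtil] added to [m], and [e >= 0] because pending weights
    are at most one. *)

Section ArgmaxSeq.
Local Open Scope order_scope.
Variables (disp : Order.disp_t) (R : orderType disp) (T : eqType).

Definition seq_argmax (g : T -> R) (s : seq T) : pred T :=
  fun k => all (fun k' => g k' <= g k) s.

Lemma has_seq_argmax (g : T -> R) (s : seq T) : s != [::] -> has (seq_argmax g s) s.
Proof.
move=> s_nz; apply/hasP.
elim: s s_nz => // a [|b s] IH _.
  by exists a; [exact: mem_head | rewrite /seq_argmax /= lexx].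
have [k ks /allP k_max] := IH isT.
have [gak|gka] := leP (g a) (g k).
  exists k; first by rewrite inE ks orbT.
  by apply/allP => k'; rewrite inE => /predU1P[-> | /k_max].
exists a; first exact: mem_head.
apply/allP => k'; rewrite inE => /predU1P[-> // | /k_max gk'].
exact: le_trans gk' (ltW gka).
Qed.

Lemma find_seq_argmax_le (x0 : T) (s : seq T) (f g : T -> R) :
  has (seq_argmax g s) s ->
  (forall i j, (i < j < size s)%N ->
     f (nth x0 s j) <= f (nth x0 s i) -> g (nth x0 s j) <= g (nth x0 s i)) ->
  (find (seq_argmax g s) s <= find (seq_argmax f s) s)%N.
Proof.
move=> has_g mono; rewrite leqNgt; apply/negP => lt_fg.
set i_f := find _ s in lt_fg; set i_g := find _ s in lt_fg.
have ig_lt : (i_g < size s)%N by rewrite -has_find.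
have has_f : has (seq_argmax f s) s by rewrite has_find (ltn_trans lt_fg).
have /allP argmax_f := nth_find x0 has_f.
have /allP argmax_g := nth_find x0 has_g.
have : seq_argmax g s (nth x0 s i_f).
  apply/allP => k ks; apply: le_trans (argmax_g k ks) _.
  by apply: mono; [rewrite lt_fg | exact/argmax_f/mem_nth].
by rewrite before_find.
Qed.

End ArgmaxSeq.

Section BetaPosterior.
Local Open Scope classical_set_scope.
Variable R : realType.
Implicit Types y m e a b c d p : R.

Definition beta_mass y m a b : R :=
  \int[lebesgue_measure]_(p in `]a, b[) beta_kernel y m p.

Definition beta_norm y m : R :=
  \int[lebesgue_measure]_(p in `[0, 1]) beta_kernel y m p.

Lemma beta_probE y m a b : Defs.beta_prob y m a b = beta_mass y m a b / beta_norm y m.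
Proof. by []. Qed.

Lemma beta_kernel_ge0 y m p : 0 <= beta_kernel y m p.
Proof. by rewrite /beta_kernel; case: ifP => // _; rewrite mulr_ge0 ?powR_ge0. Qed.

Lemma gt1_beta_kernel y m p : 1 < p -> beta_kernel y m p = 0.
Proof. by move=> p_gt1; rewrite /beta_kernel [p <= 1]leNgt p_gt1 andbF. Qed.

Lemma powR_le1 (x r : R) : 0 <= x <= 1 -> 0 <= r -> x `^ r <= 1.
Proof.
move=> /andP[x0 x1] r0; have -> : (1 : R) = 1 `^ r by rewrite powR1.
by apply: ge0_ler_powR; rewrite ?nnegrE.
Qed.

Lemma beta_kernel_le1 y m p : 0 <= y -> 0 <= m -> beta_kernel y m p <= 1.
Proof.
move=> y0 m0; rewrite /beta_kernel; case: ifP => // /andP[p0 p1].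
rewrite -[1]mulr1; apply: ler_pM; rewrite ?powR_ge0 //;
  by apply: powR_le1 => //; apply/andP; split; lra.
Qed.

Lemma measurable_beta_kernel y m : measurable_fun setT (beta_kernel y m).
Proof.
apply: measurable_fun_ifT.
- apply: measurable_and; apply: measurable_realfun.measurable_fun_ler => //;
    exact: measurable_cst.
- apply: measurable_realfun.measurable_funM;
    first exact: measurable_realfun.measurable_powR.
  apply: (measurableT_comp (measurable_realfun.measurable_powR _)).
  exact: measurable_realfun.measurable_funB.
- exact: measurable_cst.
Qed.

Lemma lebesgue_measure_bnd_itv_lty a b (ba bb : bool) :
  (lebesgue_measure [set` Interval (BSide ba a) (BSide bb b)] < +oo)%E.
Proof. by rewrite lebesgue_measure_itv; case: ifP; rewrite ?ltry. Qed.

Lemma integrable_beta_kernel y m a b (ba bb : bool) : 0 <= y -> 0 <= m ->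
  lebesgue_measure.-integrable [set` Interval (BSide ba a) (BSide bb b)]
    (EFin \o beta_kernel y m).
Proof.
move=> y0 m0; apply: measurable_bounded_integrable => //.
- exact: lebesgue_measure_bnd_itv_lty.
- exact: measurable_funS (measurable_beta_kernel y m).
- exists 1; split => // M M_gt1 p _ /=.
  by rewrite ger0_norm ?beta_kernel_ge0 // (le_trans (beta_kernel_le1 _ y0 m0)) ?ltW.
Qed.

Lemma integrable_beta_kernelZl k y m a b (ba bb : bool) : 0 <= y -> 0 <= m ->
  lebesgue_measure.-integrable [set` Interval (BSide ba a) (BSide bb b)]
    (EFin \o (fun p => k * beta_kernel y m p)).
Proof.
move=> y0 m0.
have mI : measurable ([set` Interval (BSide ba a) (BSide bb b)] : set (measurableTypeR R)).
  exact: measurable_itv.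
have := integrableZl mI k (integrable_beta_kernel a b ba bb y0 m0).
exact.
Qed.

Lemma beta_norm_ge0 y m : 0 <= beta_norm y m.
Proof. by apply: Rintegral_ge0 => p _; exact: beta_kernel_ge0. Qed.

Lemma beta_mass_ge0 y m a b : 0 <= beta_mass y m a b.
Proof. by apply: Rintegral_ge0 => p _; exact: beta_kernel_ge0. Qed.

Lemma beta_kernel_addr y m e p : 0 <= m -> 0 <= e ->
  beta_kernel y (m + e) p = beta_kernel y m p * (1 - p) `^ e.
Proof.
move=> m0 e0; rewrite /beta_kernel; case: ifP => _; last by rewrite mul0r.
have [me0|me_neq0] := eqVneq (m + e) 0.
  have [-> ->] : m = 0 /\ e = 0 by split; lra.
  by rewrite addr0 !powRr0 !mulr1.
by rewrite -mulrA powRD // (negbTE me_neq0).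
Qed.

Lemma beta_kernel_addr_le y m e c p : 0 <= m -> 0 <= e -> c < p ->
  beta_kernel y (m + e) p <= (1 - c) `^ e * beta_kernel y m p.
Proof.
move=> m0 e0 cp; rewrite beta_kernel_addr // mulrC.
have [p_le1|p_gt1] := leP p 1; last by rewrite gt1_beta_kernel // !mulr0.
apply: ler_wpM2r; first exact: beta_kernel_ge0.
by apply: ge0_ler_powR; rewrite ?nnegrE; lra.
Qed.

Lemma beta_kernel_addr_ge y m e c p : 0 <= m -> 0 <= e -> p < c -> c <= 1 ->
  (1 - c) `^ e * beta_kernel y m p <= beta_kernel y (m + e) p.
Proof.
move=> m0 e0 pc c_le1; rewrite beta_kernel_addr // [X in _ <= X]mulrC.
apply: ler_wpM2r; first exact: beta_kernel_ge0.
by apply: ge0_ler_powR; rewrite ?nnegrE; lra.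
Qed.

Lemma beta_norm_addr_le y m e : 0 <= y -> 0 <= m -> 0 <= e ->
  beta_norm y (m + e) <= beta_norm y m.
Proof.
move=> y0 m0 e0; apply: le_Rintegral => //; try exact: integrable_beta_kernel.
  by apply: integrable_beta_kernel; rewrite ?addr_ge0.
move=> p; rewrite /= in_itv /= => p01.
by rewrite beta_kernel_addr // ler_piMr ?beta_kernel_ge0 ?powR_le1 // subr_ge0; lra.
Qed.

Lemma beta_mass_addr_le y m e c d : 0 <= y -> 0 <= m -> 0 <= e ->
  beta_mass y (m + e) c d <= (1 - c) `^ e * beta_mass y m c d.
Proof.
move=> y0 m0 e0; rewrite /beta_mass -RintegralZl //; last first.
  exact: integrable_beta_kernel.
apply: le_Rintegral => //.
- by apply: integrable_beta_kernel; rewrite ?addr_ge0.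
- exact: integrable_beta_kernelZl.
- by move=> p; rewrite /= in_itv /= => /andP[cp _]; exact: beta_kernel_addr_le.
Qed.

Lemma beta_mass_addr_ge y m e a b c : 0 <= y -> 0 <= m -> 0 <= e -> b <= c -> c <= 1 ->
  (1 - c) `^ e * beta_mass y m a b <= beta_mass y (m + e) a b.
Proof.
move=> y0 m0 e0 bc c_le1; rewrite /beta_mass -RintegralZl //; last first.
  exact: integrable_beta_kernel.
apply: le_Rintegral => //.
- exact: integrable_beta_kernelZl.
- by apply: integrable_beta_kernel; rewrite ?addr_ge0.
- move=> p; rewrite /= in_itv /= => /andP[_ pb].
  by apply: beta_kernel_addr_ge => //; exact: lt_le_trans pb bc.
Qed.

Lemma ge1_beta_mass y m c d : 1 <= c -> beta_mass y m c d = 0.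
Proof.
move=> c_ge1; rewrite /beta_mass (@eq_Rintegral _ _ _ _ _ (fun=> 0)).
  by rewrite Rintegral_cst ?mul0r.
move=> p; rewrite inE /= in_itv /= => /andP[cp _].
by apply: gt1_beta_kernel; exact: le_lt_trans c_ge1 cp.
Qed.

Lemma beta_mass_right_le_left_addr y m e a b c d :
  0 <= y -> 0 <= m -> 0 <= e -> b <= c ->
  beta_mass y m c d <= beta_mass y m a b ->
  beta_mass y (m + e) c d <= beta_mass y (m + e) a b.
Proof.
move=> y0 m0 e0 bc le_cd_ab.
have [c_le1|c_gt1] := leP c 1; last by rewrite ge1_beta_mass ?beta_mass_ge0 ?(ltW c_gt1).
apply: le_trans (beta_mass_addr_le c d y0 m0 e0) _.
apply: le_trans (beta_mass_addr_ge a y0 m0 e0 bc c_le1).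
by rewrite ler_wpM2l ?powR_ge0.
Qed.

Lemma beta_prob_right_le_left_addr y m e a b c d :
  0 <= y -> 0 <= m -> 0 <= e -> b <= c ->
  Defs.beta_prob y m c d <= Defs.beta_prob y m a b ->
  Defs.beta_prob y (m + e) c d <= Defs.beta_prob y (m + e) a b.
Proof.
move=> y0 m0 e0 bc; rewrite !beta_probE.
have := beta_norm_ge0 y (m + e); rewrite le_eqVlt => /orP[/eqP<-|norm_gt0].
  by rewrite invr0 !mulr0.
have norm_m_gt0 : 0 < beta_norm y m.
  exact: lt_le_trans norm_gt0 (beta_norm_addr_le y0 m0 e0).
rewrite !ler_pM2r ?invr_gt0 //.
exact: beta_mass_right_le_left_addr.
Qed.
End BetaPosterior.

Section Keyboard.
Variable R : realType.
Implicit Types phi y m e : R.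

Lemma key_hi_le_lo phi (d1 d2 : R) (k k' : nat) : 0 <= d1 + d2 -> (k < k')%N ->
  key_hi phi d1 d2 k <= key_lo phi d1 d2 k'.
Proof.
move=> w_ge0 lt_kk'; rewrite /key_hi /key_lo /key_width.
set ks := kstar phi d1 d2.
have : ((k%:Z - ks%:Z + 1)%:~R <= (k'%:Z - ks%:Z)%:~R :> R) by rewrite ler_int; lia.
rewrite intrD mulr1z; nra.
Qed.

Lemma kmax_addr_le phi (d1 d2 : R) y m e : 0 <= y -> 0 <= m -> 0 <= e -> 0 <= d1 + d2 ->
  (kmax phi d1 d2 y (m + e) <= kmax phi d1 d2 y m)%N.
Proof.
move=> y0 m0 e0 w_ge0; rewrite /kmax ltnS.
apply: (find_seq_argmax_le (x0 := 0%N)) => [|i j /andP[lt_ij lt_j]].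
  by apply: has_seq_argmax; rewrite /keys_seq /nkeys addn1 addSn.
rewrite size_iota in lt_j; rewrite !nth_iota ?(ltn_trans lt_ij) //.
apply: beta_prob_right_le_left_addr => //.
by apply: key_hi_le_lo; rewrite // ltn_add2l.
Qed.

Lemma decision_le_kmax phi (d1 d2 : R) (y m y' m' : R) :
  (kmax phi d1 d2 y' m' <= kmax phi d1 d2 y m)%N ->
  decision phi d1 d2 y m <= decision phi d1 d2 y' m'.
Proof.
rewrite /decision.
move: (kmax phi d1 d2 y' m') (kmax phi d1 d2 y m) (kstar phi d1 d2) => k' k ks le_k'k.
by case: ltngtP => ?; case: ltngtP => ?; lia.
Qed.

End Keyboard.

Lemma effective_sample_size_le (R : numDomainType) (n : nat)
    (delta x : 'I_n -> bool) (w : 'I_n -> R) :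
  (forall i, ~~ delta i -> w i <= 1) ->
  \sum_(i < n) ((delta i && x i) : nat)%:R +
    (\sum_(i < n) ((delta i && ~~ x i) : nat)%:R + \sum_(i < n | ~~ delta i) w i)
  <= n%:R.
Proof.
move=> w_le1; rewrite addrA -big_split /= [X in _ + X]big_mkcond -big_split /=.
rewrite -[n in n%:R]card_ord -sumr_const; apply: ler_sum => i _.
case: (delta i) (w_le1 i) => /= [_|w_le1i]; last by rewrite !add0r w_le1i.
by case: (x i); rewrite /= !addr0 ?add0r.
Qed.

Theorem theorem2 (R : realType) (phi d1 d2 : R)
  (hphi : 0 < phi < 1) (hd1 : 0 < d1) (hd2 : 0 < d2)
  (n : nat) (delta x : 'I_n -> bool) (w : 'I_n -> R)
  (hw : forall i, ~~ delta i -> 0 <= w i <= 1) :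
  let ytil : R := \sum_(i < n) ((delta i && x i) : nat)%:R in
  let m : R := \sum_(i < n) ((delta i && ~~ x i) : nat)%:R in
  let mtil : R := m + \sum_(i < n | ~~ delta i) w i in
  (decision phi d1 d2 ytil mtil <= decision phi d1 d2 ytil (n%:R - ytil))%R.
Proof.
cbv zeta.
set ytil := \sum_(i < n) _; set mtil := _ + \sum_(i < n | _) _.
have ytil_ge0 : 0 <= ytil by apply: sumr_ge0.
have mtil_ge0 : 0 <= mtil by rewrite addr_ge0 ?sumr_ge0 // => i /hw /andP[].
have w_le1 i : ~~ delta i -> w i <= 1 by move=> /hw /andP[].
have := effective_sample_size_le x w_le1; rewrite -/ytil -/mtil => ess_le.
have -> : n%:R - ytil = mtil + (n%:R - ytil - mtil) by lra.
by apply: decision_le_kmax; apply: kmax_addr_le => //; lra.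
Qed.
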